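(* Let $f$ be a multiplicative function from the positive integers to the nonnegative integers with $f(p^{k-1})\le f(p^k)$ for all primes $p$ and integers $k\ge1$. A squarefree positive integer is $f$-practical if and only if it is weakly $f$-practical.
   Context: $f$ multiplicative means $f(1)=1$ and $f(ab)=f(a)f(b)$ for coprime $a,b$. $S_f(n)=\sum_{d\mid n} f(d)$. A positive integer $n$ is $f$-practical if every positive integer $m\le S_f(n)$ equals $\sum_{d\in\mathcal{D}}f(d)$ for some set $\mathcal{D}$ of distinct divisors of $n$. Write $n=p_1^{e_1}\cdots p_k^{e_k}$ with distinct primes ordered so that $f(p_1)\le\cdots\le f(p_k)$, and let $m_i=\prod_{j=1}^{i}p_j^{e_j}$ for $0\le i<k$ ($m_0=1$). Then $n$ is weakly $f$-practical if $f(p_{i+1})\le S_f(m_i)+1$ for every $0\le i<k$. *)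

From mathcomp Require Import all_boot.
Set Implicit Arguments. Unset Strict Implicit. Unset Printing Implicit Defensive.

(* f : positive integers -> nonnegative integers, modelled as nat -> nat
   (the value at 0 is irrelevant). *)
Definition multiplicative (f : nat -> nat) : Prop :=
  f 1 = 1 /\
  forall a b, 0 < a -> 0 < b -> coprime a b -> f (a * b) = f a * f b.

Definition Sf (f : nat -> nat) (n : nat) : nat := \sum_(d <- divisors n) f d.

Definition f_practical (f : nat -> nat) (n : nat) : Prop :=
  forall m, 0 < m -> m <= Sf f n ->
    exists D : seq nat,
      [/\ uniq D, (forall d, d \in D -> d %| n) & m = \sum_(d <- D) f d].

Definition weakly_f_practical (f : nat -> nat) (n : nat) : Prop :=
  exists s : seq nat,
    [/\ perm_eq s (primes n),
        sorted (fun p q => f p <= f q) s &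
        forall i, i < size s ->
          f (nth 0 s i) <= Sf f (\prod_(p <- take i s) p ^ logn p n) + 1].

Definition squarefree (n : nat) : Prop :=
  forall d, 1 < d -> ~~ (d * d %| n).

From mathcomp Require Import all_boot zify.
Set Implicit Arguments. Unset Strict Implicit. Unset Printing Implicit Defensive.

(* Monotonicity on prime powers makes f positive.  For n squarefree with primes
   p_1, ..., p_k ordered by f-value and m_i = p_1 ... p_i, we have
   S_f(m_i p_(i+1)) = S_f(m_i) (1 + f(p_(i+1))).  If f(p_(i+1)) <= S_f(m_i) + 1,
   every x <= S_f(m_(i+1)) is z + f(p_(i+1)) y with y, z <= S_f(m_i); representing
   y and z by divisors of m_i and multiplying the divisors for y by p_(i+1)
   represents x, so induction on i shows that n is f-practical.  Conversely, if
   f(p_(i+1)) > S_f(m_i) + 1 then S_f(m_i) + 1 <= S_f(n) is not representable: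
   divisors of m_i contribute at most S_f(m_i) in total, and any other divisor of n
   has a prime factor p_j with j > i, so its f-value is at least
   f(p_j) >= f(p_(i+1)). *)

Lemma leq_sum_subset (T : eqType) (s t : seq T) (F : T -> nat) :
  uniq s -> uniq t -> {subset s <= t} -> \sum_(i <- s) F i <= \sum_(i <- t) F i.
Proof. exact: (uniq_sub_le_big leqnn (fun x y => leq_addr y x)). Qed.

Lemma prime_dvd_prod_primes q t : prime q -> all prime t ->
  (q %| \prod_(p <- t) p) = (q \in t).
Proof.
move=> q_pr /allP t_pr; rewrite Euclid_dvd_prod // big_has -has_pred1.
by apply: eq_in_has => p /t_pr p_pr /=; rewrite dvdn_prime2 // eq_sym.
Qed.

Lemma prod_primes_gt0 t : all prime t -> 0 < \prod_(p <- t) p.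
Proof. by move=> /allP t_pr; rewrite big_seq prodn_cond_gt0 // => p /t_pr/prime_gt0. Qed.

Lemma coprime_prod_primes p t : prime p -> all prime t -> p \notin t ->
  coprime p (\prod_(q <- t) q).
Proof. by move=> p_pr t_pr p_t; rewrite prime_coprime // prime_dvd_prod_primes. Qed.

Lemma perm_primes_prime_uniq s n : perm_eq s (primes n) -> all prime s && uniq s.
Proof.
move=> s_n; rewrite (perm_uniq s_n) primes_uniq andbT.
by apply/allP => p; rewrite (perm_mem s_n) mem_primes => /andP[].
Qed.

Lemma squarefree_logn n p : squarefree n -> p \in primes n -> logn p n = 1.
Proof.
move=> n_sqf p_n; move: (p_n); rewrite mem_primes => /and3P[p_pr n_gt0 _].
have : ~~ (p ^ 2 %| n) by apply: n_sqf; apply: prime_gt1.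
by rewrite pfactor_dvdn // -ltnNge ltnS; move: p_n; rewrite -logn_gt0; lia.
Qed.

Lemma prod_primes_squarefree n s : 0 < n -> squarefree n -> perm_eq s (primes n) ->
  \prod_(p <- s) p = n.
Proof.
move=> n_gt0 n_sqf s_n; rewrite [RHS]prod_prime_decomp // prime_decompE big_map.
rewrite -(perm_big _ s_n); apply: eq_big_seq => p; rewrite (perm_mem s_n).
by move=> /(squarefree_logn n_sqf) ->.
Qed.

Lemma coprime_divn_squarefree n q d : squarefree n -> prime q -> q %| d -> d %| n ->
  coprime q (d %/ q).
Proof.
move=> n_sqf q_pr q_d d_n; rewrite prime_coprime //; apply/negP => q_dq.
move/negP: (n_sqf q (prime_gt1 q_pr)); apply; apply: dvdn_trans d_n.
by rewrite -(divnK q_d) dvdn_pmul2r ?prime_gt0.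
Qed.

Lemma bounded_two_digit_expansion a S x : 0 < a -> a <= S + 1 -> x <= S * (1 + a) ->
  exists y z, [/\ y <= S, z <= S & x = z + a * y].
Proof.
move=> a_gt0 a_le x_le; have [S_le | lt_S] := leqP S (x %/ a).
  exists S, (x - a * S); split => //; first lia.
  by rewrite subnK // mulnC; apply: leq_trans (leq_divM x a); rewrite leq_mul2r S_le orbT.
exists (x %/ a), (x %% a); split; first exact: ltnW.
  by have := ltn_mod x a; rewrite a_gt0; lia.
by rewrite mulnC addnC -divn_eq.
Qed.

Section DivisorsMulPrime.
Variables (m p : nat).
Hypotheses (m_gt0 : 0 < m) (p_pr : prime p) (p_coprime_m : coprime p m).

Lemma uniq_cat_mul_prime D E : {in D, forall d, d %| m} -> {in E, forall d, d %| m} ->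
  uniq D -> uniq E -> uniq (D ++ [seq d * p | d <- E]).
Proof.
move=> D_m E_m D_uniq E_uniq; rewrite cat_uniq D_uniq /=; apply/andP; split.
  apply/hasPn => _ /mapP[d /E_m d_m ->]; apply/negP => /D_m dp_m.
  by move: p_coprime_m; rewrite prime_coprime // (dvdn_trans (dvdn_mull d _) dp_m).
by rewrite map_inj_uniq // => d e /eqP; rewrite eqn_pmul2r ?prime_gt0 // => /eqP.
Qed.

Lemma divisors_mul_prime :
  perm_eq (divisors (m * p)) (divisors m ++ [seq d * p | d <- divisors m]).
Proof.
have mp_gt0 : 0 < m * p by rewrite muln_gt0 m_gt0 prime_gt0.
apply: uniq_perm; rewrite ?divisors_uniq ?uniq_cat_mul_prime ?divisors_uniq //;
  try by move=> d; rewrite -dvdn_divisors.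
move=> d; rewrite mem_cat -!dvdn_divisors //; apply/idP/orP => [d_mp | ].
  have [p_d | p_nd] := boolP (p %| d).
    right; apply/mapP; exists (d %/ p); last by rewrite divnK.
    by rewrite -dvdn_divisors // -(dvdn_pmul2r (prime_gt0 p_pr)) divnK.
  by left; rewrite -(Gauss_dvdl _ (_ : coprime d p)) // coprime_sym prime_coprime.
case=> [/dvdn_mulr // | /mapP[e]]; rewrite -dvdn_divisors // => e_m ->.
by rewrite dvdn_pmul2r ?prime_gt0.
Qed.

End DivisorsMulPrime.

Section Multiplicative.
Variable f : nat -> nat.
Hypothesis f_mult : multiplicative f.

Lemma multiplicative_gt0 :
  (forall p k, prime p -> 1 <= k -> f (p ^ k.-1) <= f (p ^ k)) ->
  forall n, 0 < n -> 0 < f n.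
Proof.
have [f1 fM] := f_mult; move=> f_mono.
have fX_gt0 p k : prime p -> 0 < f (p ^ k).
  move=> p_pr; elim: k => [|k IHk]; first by rewrite f1.
  exact: leq_trans IHk (f_mono p k.+1 p_pr isT).
elim/ltn_ind => n IHn n_gt0; have [n_le1 | n_gt1] := leqP n 1.
  suff -> : n = 1 by rewrite f1.
  lia.
have p_pr := pdiv_prime n_gt1; set p := pdiv n in p_pr *.
have [m p_coprime_m def_n] := pfactor_coprime p_pr n_gt0.
have pX_gt1 : 1 < p ^ logn p n.
  by rewrite -(expn0 p) ltn_exp2l ?prime_gt1 // logn_gt0 mem_primes p_pr n_gt0 pdiv_dvd.
have m_gt0 : 0 < m by move: n_gt0; rewrite def_n muln_gt0 => /andP[].
rewrite def_n fM ?(ltnW pX_gt1) 1?coprime_sym ?coprimeXl //.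
by rewrite muln_gt0 fX_gt0 // andbT IHn // [X in _ < X]def_n ltn_Pmulr.
Qed.

Lemma Sf1 : Sf f 1 = 1.
Proof. by rewrite /Sf (_ : divisors 1 = [:: 1]) // big_seq1 f_mult.1. Qed.

Lemma leq_Sf_dvdn m n : 0 < n -> m %| n -> Sf f m <= Sf f n.
Proof.
move=> n_gt0 m_n; apply: leq_sum_subset; rewrite ?divisors_uniq //.
by move=> d; rewrite -!dvdn_divisors ?(dvdn_gt0 n_gt0 m_n) // => /dvdn_trans; apply.
Qed.

Hypothesis f_gt0 : forall n, 0 < n -> 0 < f n.

Lemma leq_f_unitary_divisor a d : 0 < d -> a %| d -> coprime a (d %/ a) -> f a <= f d.
Proof.
move=> d_gt0 a_d a_coprime; have a_gt0 := dvdn_gt0 d_gt0 a_d.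
have da_gt0 : 0 < d %/ a by rewrite divn_gt0 // dvdn_leq.
by rewrite -(divnK a_d) mulnC f_mult.2 // leq_pmulr // f_gt0.
Qed.

Section MulPrime.
Variables (m p : nat).
Hypotheses (m_gt0 : 0 < m) (p_pr : prime p) (p_coprime_m : coprime p m).

Lemma sum_f_mul_prime E : {in E, forall d, d %| m} ->
  \sum_(d <- [seq d * p | d <- E]) f d = f p * \sum_(d <- E) f d.
Proof.
move=> E_m; rewrite big_map big_distrr /=; apply: eq_big_seq => d /E_m d_m.
rewrite mulnC f_mult.2 ?(dvdn_gt0 m_gt0 d_m) ?prime_gt0 //.
exact: coprime_dvdr d_m p_coprime_m.
Qed.

Lemma Sf_mul_prime : Sf f (m * p) = Sf f m * (1 + f p).
Proof.
rewrite /Sf (perm_big _ (divisors_mul_prime m_gt0 p_pr p_coprime_m)) big_cat /=.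
by rewrite sum_f_mul_prime => [|d]; rewrite -?dvdn_divisors // mulnDr muln1 mulnC.
Qed.

End MulPrime.

Definition representable n x := exists D : seq nat,
  [/\ uniq D, (forall d, d \in D -> d %| n) & x = \sum_(d <- D) f d].

Lemma representable0 n : representable n 0.
Proof. by exists [::]; rewrite big_nil. Qed.

Lemma representable_mul_prime m p : 0 < m -> prime p -> coprime p m ->
  f p <= Sf f m + 1 -> (forall x, x <= Sf f m -> representable m x) ->
  forall x, x <= Sf f (m * p) -> representable (m * p) x.
Proof.
move=> m_gt0 p_pr p_coprime_m fp_le m_repr x.
rewrite Sf_mul_prime // => /(bounded_two_digit_expansion (f_gt0 (prime_gt0 p_pr)) fp_le).
move=> [y [z [/m_repr [E [E_uniq E_m ->]] /m_repr [D [D_uniq D_m ->]] ->]]].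
exists (D ++ [seq d * p | d <- E]); split.
- exact: (uniq_cat_mul_prime p_pr p_coprime_m D_m E_m).
- move=> d; rewrite mem_cat => /orP[/D_m/dvdn_mulr // | /mapP[e /E_m e_m ->]].
  by rewrite dvdn_pmul2r ?prime_gt0.
- by rewrite big_cat (sum_f_mul_prime m_gt0 p_pr p_coprime_m E_m).
Qed.

Lemma representable_prod_primes s : all prime s -> uniq s ->
  (forall i, i < size s -> f (nth 0 s i) <= Sf f (\prod_(p <- take i s) p) + 1) ->
  forall x, x <= Sf f (\prod_(p <- s) p) -> representable (\prod_(p <- s) p) x.
Proof.
elim/last_ind: s => [_ _ _ | s p IHs].
  rewrite big_nil Sf1 => -[_ | [_ | //]]; first exact: representable0.
  by exists [:: 1]; rewrite big_seq1 f_mult.1; split=> // d; rewrite inE => /eqP ->.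
rewrite all_rcons rcons_uniq -cats1 size_cat addn1 => /andP[p_pr s_pr] /andP[p_s s_uniq] weak.
rewrite big_cat big_seq1 /=; apply: representable_mul_prime => //.
- exact: prod_primes_gt0.
- exact: coprime_prod_primes.
- by have := weak (size s) (ltnSn _); rewrite nth_cat ltnn subnn take_size_cat.
- apply: IHs => // i lt_i_s.
  by have := weak i (ltnW lt_i_s); rewrite nth_cat lt_i_s takel_cat // ltnW.
Qed.

Lemma f_practical_sorted_primes n t p u : 0 < n -> squarefree n ->
  perm_eq (t ++ p :: u) (primes n) -> sorted (fun a b => f a <= f b) (t ++ p :: u) ->
  f_practical f n -> f p <= Sf f (\prod_(q <- t) q) + 1.
Proof.
move=> n_gt0 n_sqf s_n s_sorted n_prac.
have def_n : n = \prod_(q <- t) q * \prod_(q <- p :: u) q.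
  by rewrite -big_cat (prod_primes_squarefree n_gt0 n_sqf s_n).
have /andP[] := perm_primes_prime_uniq s_n.
rewrite all_cat cat_uniq /= => /and3P[t_pr p_pr u_pr] /and3P[_ /norP[p_t _] _].
set m := \prod_(q <- t) q in def_n *; have m_gt0 : 0 < m := prod_primes_gt0 t_pr.
have fp_le_fd d : d %| n -> ~~ (d %| m) -> f p <= f d.
  move=> d_n d_nm; have d_gt0 := dvdn_gt0 n_gt0 d_n.
  have : ~~ coprime d (\prod_(q <- p :: u) q).
    by apply: contra d_nm => /Gauss_dvdl <-; rewrite -def_n.
  rewrite coprime_has_primes ?prod_primes_gt0 /= ?p_pr // negbK.
  case/hasP=> q; rewrite !mem_primes => /and3P[q_pr _ q_r] /and3P[_ _ q_d].
  apply: leq_trans (leq_f_unitary_divisor d_gt0 q_d (coprime_divn_squarefree n_sqf q_pr q_d d_n)).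
  have : q \in p :: u by rewrite -prime_dvd_prod_primes //= p_pr.
  rewrite inE => /predU1P[-> // | q_u].
  have /order_path_min p_le_u : path (fun a b => f a <= f b) p u.
    by move: s_sorted; rewrite sorted_cat_cons => /andP[].
  by apply: (allP (p_le_u _)) => // a b c; apply: leq_trans.
rewrite leqNgt; apply/negP => S_lt_fp.
have S_gt0 : 0 < Sf f m by rewrite -Sf1 leq_Sf_dvdn ?dvd1n.
have S_lt_Sn : Sf f m + 1 <= Sf f n.
  apply: leq_trans (leq_Sf_dvdn n_gt0 (_ : m * p %| n)); last first.
    by rewrite def_n big_cons mulnA dvdn_mulr.
  by rewrite Sf_mul_prime ?coprime_prod_primes //; nia.
have [D [D_uniq D_n sum_D]] := n_prac _ (leq_addl _ _) S_lt_Sn.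
have [D_m | ] := boolP (all (dvdn^~ m) D).
  suff : \sum_(d <- D) f d <= Sf f m by lia.
  apply: leq_sum_subset; rewrite ?divisors_uniq // => d /(allP D_m).
  by rewrite dvdn_divisors.
rewrite -has_predC => /hasP[d d_D /= d_nm].
have fp_le := fp_le_fd d (D_n d d_D) d_nm.
suff : f d <= \sum_(d <- D) f d by lia.
by rewrite -[f d](big_seq1 addn) leq_sum_subset // => e; rewrite inE => /eqP ->.
Qed.

End Multiplicative.

Theorem corollary2p6 (f : nat -> nat) :
  multiplicative f ->
  (forall p k, prime p -> 1 <= k -> f (p ^ k.-1) <= f (p ^ k)) ->
  forall n, 0 < n -> squarefree n ->
    (f_practical f n <-> weakly_f_practical f n).
Proof.
move=> f_mult f_mono n n_gt0 n_sqf; have f_gt0 := multiplicative_gt0 f_mult f_mono.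
have prod_take s i : perm_eq s (primes n) ->
    \prod_(p <- take i s) p ^ logn p n = \prod_(p <- take i s) p.
  move=> s_n; apply: eq_big_seq => p /mem_take.
  by rewrite (perm_mem s_n) => /(squarefree_logn n_sqf) ->.
split => [n_prac | [s [s_n _ s_weak]] x _ x_le].
  pose s := sort (fun p q => f p <= f q) (primes n).
  have s_n : perm_eq s (primes n) by rewrite perm_sort.
  have s_sorted : sorted (fun p q => f p <= f q) s.
    by apply: sort_sorted => p q; apply: leq_total.
  exists s; split => // i lt_i_s; rewrite prod_take //.
  have def_s : take i s ++ nth 0 s i :: drop i.+1 s = s.
    by rewrite -drop_nth // cat_take_drop.
  rewrite -def_s in s_n s_sorted.
  exact: (f_practical_sorted_primes f_mult f_gt0 n_gt0 n_sqf s_n s_sorted n_prac).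
have /andP[s_pr s_uniq] := perm_primes_prime_uniq s_n.
rewrite -(prod_primes_squarefree n_gt0 n_sqf s_n) in x_le *.
apply: (representable_prod_primes f_mult f_gt0 s_pr s_uniq _ x_le) => i lt_i_s.
by rewrite -prod_take //; apply: s_weak.
Qed.
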